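(* Consider the FlexPD-F iterates described in the context with $\beta>0$, integer $T\ge1$ and $U=I-\alpha B$. Let $0<\eta_1<2m$. If $0<\alpha<\frac{1}{L^2/\eta_1+\rho(B)}$ and $0<\beta<\frac{2m-\eta_1}{\rho(A'A)}$, then there exists $\delta_F>0$ such that for all $k\ge0$, \[\|x^{k+1,T}-x^*\|_U^2+\frac{\alpha}{\beta}\|\lambda^{k+1}-\lambda^*\|^2\le\frac{1}{1+\delta_F}\Big(\|x^{k+1,T-1}-x^*\|_U^2+\frac{\alpha}{\beta}\|\lambda^k-\lambda^*\|^2\Big).\]
   Context: Setting: $n$ agents are connected by a connected undirected graph with edge set $\mathcal E$, $\epsilon=|\mathcal E|$. For $x\in\mathbb R^n$ let $f(x)=\sum_{i=1}^n f_i(x_i)$, where each $f_i:\mathbb R\to\mathbb R$ is twice differentiable with $m\le f_i''\le L$ for constants $0<m\le L$; $\nabla f(x)=(f_1'(x_1),\dots,f_n'(x_n))'$. $A\in\mathbb R^{\epsilon\times n}$ is the edge–node incidence matrix (null space spanned by the all-ones vector). $B\in\mathbb R^{n\times n}$ is symmetric positive semidefinite with the same null space as $A$, off-diagonal entries nonzero only on edges. $x^*$ is the unique minimizer of $f$ subject to $Ax=0$ and $\lambda^*$ a Lagrange multiplier with $\nabla f(x^* )+A'\lambda^*=0$, $Ax^*=0$, $Bx^*=0$, chosen in the column space of $A$. FlexPD-F: given $\alpha,\beta>0$, $T\ge1$, $x^0$ arbitrary, $\lambda^0=0$; for $k\ge0$: $x^{k+1,0}=x^k$, $x^{k+1,t}=(I-\alpha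 B)x^{k+1,t-1}-\alpha\nabla f(x^{k+1,t-1})-\alpha A'\lambda^k$ for $t=1,\dots,T$, $x^{k+1}=x^{k+1,T}$, $\lambda^{k+1}=\lambda^k+\beta Ax^{k+1}$. Notation: $\rho(S)$ largest eigenvalue of symmetric $S$; $\|v\|_S^2=v'Sv$; $\|\cdot\|$ Euclidean norm. *)

From HB Require Import structures.
From mathcomp Require Import all_boot all_order all_algebra.
From mathcomp Require Import all_classical all_reals all_analysis.
Set Implicit Arguments. Unset Strict Implicit. Unset Printing Implicit Defensive.
Import Order.TTheory GRing.Theory Num.Theory.
Local Open Scope ring_scope.

Section FlexPD.
Variable R : realType.

(* Graph on nodes 'I_n with eps edges; edge e has endpoints ends e = (i, j), i <> j
   (orientation arbitrary). *)
Definition edge_adj n eps (ends : 'I_eps -> 'I_n * 'I_n) (i j : 'I_n) : bool :=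
  [exists e, (ends e == (i, j)) || (ends e == (j, i))].

Definition simple_graph n eps (ends : 'I_eps -> 'I_n * 'I_n) : Prop :=
  (forall e, (ends e).1 != (ends e).2) /\
  (forall e e', (ends e == ends e') || (ends e == ((ends e').2, (ends e').1)) -> e = e').

Definition graph_connected n eps (ends : 'I_eps -> 'I_n * 'I_n) : Prop :=
  forall i j : 'I_n, connect (edge_adj ends) i j.

Definition incidence n eps (ends : 'I_eps -> 'I_n * 'I_n) : 'M[R]_(eps, n) :=
  \matrix_(e, i) (if i == (ends e).1 then 1 else if i == (ends e).2 then -1 else 0).

Definition Fsum n (f : 'I_n -> R -> R) (x : 'cV[R]_n) : R := \sum_i f i (x i 0).
Definition gradF n (f : 'I_n -> R -> R) (x : 'cV[R]_n) : 'cV[R]_n :=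
  \col_i (derive1 (f i) (x i 0)).

Definition sqnormS n (S : 'M[R]_n) (v : 'cV[R]_n) : R := (v^T *m S *m v) 0 0.
Definition sqnorm m (v : 'cV[R]_m) : R := (v^T *m v) 0 0.

Definition psd n (S : 'M[R]_n) : Prop := forall v : 'cV[R]_n, 0 <= sqnormS S v.

Definition is_largest_eigenvalue n (S : 'M[R]_n) (r : R) : Prop :=
  eigenvalue S r /\ (forall r', eigenvalue S r' -> r' <= r).

Definition inner_step n eps (A : 'M[R]_(eps, n)) (B : 'M[R]_n) (f : 'I_n -> R -> R)
  (alpha : R) (lam : 'cV[R]_eps) (y : 'cV[R]_n) : 'cV[R]_n :=
  (1%:M - alpha *: B) *m y - alpha *: gradF f y - alpha *: (A^T *m lam).

(* x^{k+1,t} given (x^k, lambda^k) *)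
Definition inner_iter n eps (A : 'M[R]_(eps, n)) (B : 'M[R]_n) (f : 'I_n -> R -> R)
  (alpha : R) (t : nat) (xk : 'cV[R]_n) (lamk : 'cV[R]_eps) : 'cV[R]_n :=
  iter t (inner_step A B f alpha lamk) xk.

Fixpoint flexpdF n eps (A : 'M[R]_(eps, n)) (B : 'M[R]_n) (f : 'I_n -> R -> R)
  (alpha beta : R) (T : nat) (x0 : 'cV[R]_n) (k : nat) : 'cV[R]_n * 'cV[R]_eps :=
  match k with
  | 0 => (x0, 0)
  | k'.+1 =>
      let p := flexpdF A B f alpha beta T x0 k' in
      let x' := inner_iter A B f alpha T p.1 p.2 in
      (x', p.2 + beta *: (A *m x'))
  end.

End FlexPD.

From HB Require Import structures.
From mathcomp Require Import all_boot all_order all_algebra.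
From mathcomp Require Import all_classical all_reals all_analysis.
From mathcomp Require Import ring lra.
Import Order.TTheory GRing.Theory Num.Theory.
Local Open Scope ring_scope.

(* Write e, p and mu for the deviations of x^{k+1,T-1}, x^{k+1,T} and lambda^k from the
   saddle point xs, lams.  The last inner step reads p = U e - alpha H e - alpha A'mu,
   where H is diagonal with entries in [m, L] (mean value theorem applied to each f_i').
   Expanding V(x, mu) = |x|_U^2 + alpha/beta |mu|^2 at (p, mu + beta A p) and at (e, mu),
   Young's inequality with eta1 and the Rayleigh bounds for B and A'A show that V
   decreases by at least c (|p|^2 + |e - p|^2), where c > 0 by the step-size conditions.
   Conversely, mu + beta A p lies in the range of A, so its norm is controlled by that of
   A'(mu + beta A p), which is linear in p, e - p and H e; hence
   V(p, mu + beta A p) <= K (|p|^2 + |e - p|^2), and delta_F = c / K works.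
   The Rayleigh bound v'Sv <= rho(S) |v|^2 is obtained without the spectral theorem:
   the least admissible bound s is attained, and if s were not an eigenvalue then sI - S
   would be positive semidefinite and invertible, hence coercive, so s could be lowered. *)

Section FlexPDConvergence.
Variable R : realType.
Local Set Implicit Arguments.
Local Unset Strict Implicit.

Definition dot n (u v : 'cV[R]_n) : R := \sum_i u i 0 * v i 0.

Lemma trmx_mulmx_dot n (u v : 'cV[R]_n) : (u^T *m v) 0 0 = dot u v.
Proof. by rewrite mxE; apply: eq_bigr => i _; rewrite mxE. Qed.

Lemma sqnormSE n (S : 'M[R]_n) v : sqnormS S v = dot v (S *m v).
Proof. by rewrite /sqnormS -mulmxA trmx_mulmx_dot. Qed.

Lemma sqnormE n (v : 'cV[R]_n) : sqnorm v = dot v v.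
Proof. by rewrite /sqnorm trmx_mulmx_dot. Qed.

Lemma dotC n (u v : 'cV[R]_n) : dot u v = dot v u.
Proof. by apply: eq_bigr => i _; rewrite mulrC. Qed.

Lemma dotDl n (u v w : 'cV[R]_n) : dot (u + v) w = dot u w + dot v w.
Proof. by rewrite /dot -big_split; apply: eq_bigr => i _; rewrite mxE mulrDl. Qed.

Lemma dotDr n (u v w : 'cV[R]_n) : dot w (u + v) = dot w u + dot w v.
Proof. by rewrite dotC dotDl !(dotC w). Qed.

Lemma dotZl n a (u w : 'cV[R]_n) : dot (a *: u) w = a * dot u w.
Proof. by rewrite /dot mulr_sumr; apply: eq_bigr => i _; rewrite mxE mulrA. Qed.

Lemma dotZr n a (u w : 'cV[R]_n) : dot w (a *: u) = a * dot w u.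
Proof. by rewrite dotC dotZl dotC. Qed.

Lemma dotNr n (u w : 'cV[R]_n) : dot w (- u) = - dot w u.
Proof. by rewrite -scaleN1r dotZr mulN1r. Qed.

Lemma dotBl n (u v w : 'cV[R]_n) : dot (u - v) w = dot u w - dot v w.
Proof. by rewrite dotC dotDr dotNr !(dotC w). Qed.

Lemma dotBr n (u v w : 'cV[R]_n) : dot w (u - v) = dot w u - dot w v.
Proof. by rewrite dotDr dotNr. Qed.

Lemma dot_mulmx m n (M : 'M[R]_(m, n)) u v : dot u (M *m v) = dot (M^T *m u) v.
Proof. by rewrite -!trmx_mulmx_dot trmx_mul trmxK mulmxA. Qed.

Lemma dot_mulmx_sym n (S : 'M[R]_n) u v : S^T = S -> dot (S *m u) v = dot u (S *m v).
Proof. by move=> Ssym; rewrite dot_mulmx Ssym dotC. Qed.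

Lemma dot_ge0 n (u : 'cV[R]_n) : 0 <= dot u u.
Proof. by apply: sumr_ge0 => i _; exact: sqr_ge0. Qed.

Lemma sqr_coord_le_dot n (u : 'cV[R]_n) i : u i 0 ^+ 2 <= dot u u.
Proof.
by rewrite /dot (bigD1 i) //= -expr2 lerDl; apply: sumr_ge0 => j _; exact: sqr_ge0.
Qed.

Lemma dot_add2_le n (u v : 'cV[R]_n) : dot (u + v) (u + v) <= 2 * (dot u u + dot v v).
Proof.
rewrite /dot -big_split mulr_sumr /=; apply: ler_sum => i _; rewrite !mxE -!expr2.
have := sqr_ge0 (u i 0 - v i 0); rewrite sqrrB sqrrD; lra.
Qed.

Lemma dot_add4_le n (u v w x : 'cV[R]_n) :
  dot (u + v + w + x) (u + v + w + x) <= 4 * (dot u u + dot v v + dot w w + dot x x).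
Proof.
rewrite /dot -!big_split mulr_sumr /=; apply: ler_sum => i _; rewrite !mxE -!expr2.
set a := u i 0; set b := v i 0; set c := w i 0; set d := x i 0.
have := sqr_ge0 (a - b); have := sqr_ge0 (a - c); have := sqr_ge0 (a - d).
have := sqr_ge0 (b - c); have := sqr_ge0 (b - d); have := sqr_ge0 (c - d).
rewrite !sqrrB !sqrrD; lra.
Qed.

Lemma quad_form_bounded n (P : 'M[R]_n) :
  exists2 K, 0 < K & forall u, dot u (P *m u) <= K * dot u u.
Proof.
set K := \sum_i \sum_j `|P i j|.
have K_ge0 : 0 <= K by apply: sumr_ge0 => i _; apply: sumr_ge0.
exists (1 + K) => [|u]; first lra.
have uPu_le : dot u (P *m u) <= K * dot u u.
  rewrite /dot mulr_suml; apply: ler_sum => i _; rewrite mxE mulr_sumr mulr_suml.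
  apply: ler_sum => j _; set x := u i 0; set y := u j 0.
  have xy_le : `|x * y| <= dot u u.
    have := sqr_coord_le_dot u i; have := sqr_coord_le_dot u j.
    have := sqr_ge0 (`|x| - `|y|); rewrite sqrrB normrM -(real_normK (num_real x)).
    rewrite -(real_normK (num_real y)); lra.
  rewrite mulrCA; apply: (le_trans (ler_norm _)); rewrite normrM.
  exact: ler_wpM2l.
by apply: (le_trans uPu_le); rewrite mulrDl mul1r lerDr; exact: dot_ge0.
Qed.

Lemma mulmx_norm_bounded m n (M : 'M[R]_(m, n)) :
  exists2 K, 0 < K & forall v, dot (M *m v) (M *m v) <= K * dot v v.
Proof.
have [K K_gt0 hK] := quad_form_bounded (M^T *m M).
by exists K => // v; rewrite dot_mulmx dotC mulmxA.
Qed.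

Lemma psd_unitmx_coercive n (N : 'M[R]_n) : N^T = N -> N \in unitmx ->
  (forall v, 0 <= dot v (N *m v)) ->
  exists2 K, 0 < K & forall u, dot u u <= K * dot u (N *m u).
Proof.
move=> Nsym Nunit Npsd.
have [K K_gt0 hK] := quad_form_bounded (invmx N).
exists K => // u.
set w := invmx N *m u; set t := K^-1.
have Nw : N *m w = u by rewrite /w mulmxA mulmxV // mul1mx.
have wNw : dot w (N *m w) <= K * dot u u by rewrite Nw dotC; exact: hK.
have wNu : dot w (N *m u) = dot u u by rewrite -(dot_mulmx_sym _ _ Nsym) Nw.
have wu : dot w u = dot w (N *m w) by rewrite Nw.
(* Positivity at u - t N^-1 u: 0 <= u'Nu - 2t|u|^2 + t^2 u'N^-1u, and t u'N^-1u <= |u|^2. *)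
have := Npsd (u - t *: w).
rewrite mulmxBr -scalemxAr Nw dotBl !dotBr !dotZl !dotZr wNu wu.
set a := dot u (N *m u); set b := dot u u in wNw *.
set c := dot w (N *m w) in wNw * => psd_uw.
have Kt : K * t = 1 by rewrite mulfV ?gt_eqF.
have tc_le : t * c <= b.
  have : t * c <= t * (K * b) by rewrite ler_wpM2l // /t invr_ge0 ltW.
  by rewrite mulrA [t * K]mulrC Kt mul1r.
have : 0 <= K * (a - t * b - (t * b - t * (t * c))) by apply: mulr_ge0 => //; exact: ltW.
have -> : K * (a - t * b - (t * b - t * (t * c))) = K * a - 2 * (K * t) * b + (K * t) * t * c.
  by ring.
rewrite Kt; lra.
Qed.

Lemma rayleigh_improve_off_spectrum n (M : 'M[R]_n) (s : R) : M^T = M ->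
  (forall u, dot u (M *m u) <= s * dot u u) -> ~~ eigenvalue M s ->
  exists2 c, 0 < c & forall u, dot u (M *m u) <= (s - c) * dot u u.
Proof.
move=> Msym Ms not_eig.
set N := s%:M - M.
have NuE v : dot v (N *m v) = s * dot v v - dot v (M *m v).
  by rewrite mulmxBl mul_scalar_mx dotBr dotZr.
have Nsym : N^T = N by rewrite raddfB /= tr_scalar_mx Msym.
have Nunit : N \in unitmx.
  move: not_eig; rewrite /eigenvalue /eigenspace negbK => /eqP ker0.
  by rewrite /N -(unitmxZ _ (unitrN1 _)) scaleN1r opprB -row_free_unit -kermx_eq0 ker0.
have Npsd v : 0 <= dot v (N *m v) by rewrite NuE subr_ge0.
have [K K_gt0 hK] := psd_unitmx_coercive Nsym Nunit Npsd.
exists K^-1 => [|u]; first by rewrite invr_gt0.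
have : K^-1 * dot u u <= K^-1 * (K * dot u (N *m u)).
  by apply: ler_wpM2l; [rewrite invr_ge0 ltW | exact: hK].
rewrite mulKf ?gt_eqF // NuE; lra.
Qed.

Lemma rayleigh_le_max_eigenvalue n (M : 'M[R]_n) (r : R) : (0 < n)%N -> M^T = M ->
  (forall a, eigenvalue M a -> a <= r) ->
  forall u, dot u (M *m u) <= r * dot u u.
Proof.
move=> n_gt0 Msym max_r.
pose E := [set t : R | forall u, dot u (M *m u) <= t * dot u u]%classic.
have [K _ EK] := quad_form_bounded M.
pose u0 : 'cV[R]_n := const_mx 1.
have u0_gt0 : 0 < dot u0 u0.
  rewrite /dot (bigD1 (Ordinal n_gt0)) //= !mxE mulr1 ltr_pwDl //.
  by apply: sumr_ge0 => i _; rewrite !mxE mulr1.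
have E_lb : lbound E (dot u0 (M *m u0) / dot u0 u0).
  by move=> t Et; rewrite ler_pdivrMr //; exact: Et.
have E_inf : has_inf E by split; [exists K | exists (dot u0 (M *m u0) / dot u0 u0)].
set s := inf E.
have Es : E s.
  move=> u; have uu0 := dot_ge0 u.
  apply/ler_addgt0Pr => e e_gt0.
  have e'_gt0 : 0 < e / (dot u u + 1) by rewrite divr_gt0 // ltr_pwDr.
  have [t Et ts] := inf_adherent e'_gt0 E_inf.
  apply: (le_trans (Et u)).
  have : t * dot u u <= (s + e / (dot u u + 1)) * dot u u by rewrite ler_wpM2r // ltW.
  move/le_trans; apply.
  rewrite mulrDl lerD2l mulrAC ler_pdivrMr ?ltr_pwDr //; nra.
have s_eig : eigenvalue M s.
  case: (boolP (eigenvalue M s)) => // not_eig; exfalso.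
  have [c c_gt0 Esc] := rayleigh_improve_off_spectrum Msym Es not_eig.
  have := ge_inf (ex_intro _ _ E_lb) Esc; rewrite -/s; lra.
move=> u; apply: (le_trans (Es u)); apply: ler_wpM2r; [exact: dot_ge0 | exact: max_r].
Qed.

Lemma mulmx_norm_le_max_eigenvalue e n (A : 'M[R]_(e, n)) (r : R) : (0 < n)%N ->
  (forall a, eigenvalue (A^T *m A) a -> a <= r) ->
  forall u, dot (A *m u) (A *m u) <= r * dot u u.
Proof.
move=> n_gt0 max_r u; rewrite dot_mulmx dotC mulmxA.
by apply: (rayleigh_le_max_eigenvalue n_gt0 _ max_r); rewrite trmx_mul trmxK.
Qed.

Lemma trmx_mulmx_eq0 e n (X : 'M[R]_(e, n)) : X^T *m X = 0 -> X = 0.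
Proof.
move=> h; apply/matrixP => i j; rewrite mxE.
have := congr1 (fun Y : 'M[R]_n => Y j j) h; rewrite !mxE => /eqP.
rewrite psumr_eq0 => [/allP /(_ i (mem_index_enum _))|k _].
  by rewrite mxE -expr2 sqrf_eq0 => /eqP.
by rewrite mxE -expr2 sqr_ge0.
Qed.

Lemma range_norm_le_trmx e n (A : 'M[R]_(e, n)) :
  exists2 K, 0 < K & forall z, dot (A *m z) (A *m z) <= K * dot (A^T *m (A *m z)) (A^T *m (A *m z)).
Proof.
have A_le : (A <= A^T *m A)%MS.
  rewrite submxE; apply/eqP; apply: trmx_mulmx_eq0.
  by rewrite trmx_mul mulmxA -(mulmxA _ A^T A) -mulmxA mulmx_coker mulmx0.
have [D AE] := submxP A_le.
have [K K_gt0 hK] := mulmx_norm_bounded D.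
by exists K => // z; rewrite {1 2}AE -!mulmxA.
Qed.

Definition diag_scaled (m L : R) n (g e : 'cV[R]_n) :=
  forall i, exists2 h, m <= h <= L & g i 0 = h * e i 0.

Lemma derive1_increment (F : R -> R) (m L : R) :
  (forall x, derivable F x 1) -> (forall x, derivable (derive1 F) x 1) ->
  (forall x, m <= derive1 (derive1 F) x <= L) ->
  forall a b, exists2 h, m <= h <= L & derive1 F b - derive1 F a = h * (b - a).
Proof.
move=> dF dF' F''_mL.
suff incr a b : a <= b -> exists2 h, m <= h <= L & derive1 F b - derive1 F a = h * (b - a).
  move=> a b; case: (lerP a b) => [/incr //|/ltW/incr [h hmL hE]].
  by exists h; rewrite // -opprB hE -mulrN opprB.
move=> ab.
have [c _ hc] := @MVT_segment R (derive1 F) (derive1 (derive1 F)) a b ab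
  (fun x _ => ltac:(rewrite derive1E; exact: derivableP))
  (derivable_within_continuous (fun x _ => dF' x)).
by exists (derive1 (derive1 F) c).
Qed.

Lemma gradF_diag_scaled n (f : 'I_n -> R -> R) (m L : R) y z :
  (forall i x, derivable (f i) x 1 /\ derivable (derive1 (f i)) x 1) ->
  (forall i x, m <= derive1 (derive1 (f i)) x <= L) ->
  diag_scaled m L (gradF f y - gradF f z) (y - z).
Proof.
move=> f_der f''_mL i; rewrite !mxE.
exact: derive1_increment (fun x => (f_der i x).1) (fun x => (f_der i x).2) (f''_mL i) _ _.
Qed.

Lemma diag_scaled_young (m L eta : R) n (g e p : 'cV[R]_n) :
  0 < m -> 0 < eta -> diag_scaled m L g e ->
  (2 * m - eta) * dot p p - L ^+ 2 / eta * dot (e - p) (e - p) <= 2 * dot g p.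
Proof.
move=> m_gt0 eta_gt0 g_e; rewrite /dot !mulr_sumr -sumrB; apply: ler_sum => i _.
have [h /andP[mh hL] ->] := g_e i; rewrite !mxE -!expr2.
set x := p i 0; set d := e i 0 - x.
have -> : e i 0 = x + d by rewrite /d addrC subrK.
have hk : L ^+ 2 / eta * eta = L ^+ 2 by rewrite divfK ?gt_eqF.
have h2L : h ^+ 2 * d ^+ 2 <= L ^+ 2 * d ^+ 2.
  by rewrite ler_wpM2r ?sqr_ge0 // ler_sqr ?nnegrE; lra.
(* Young: [-2 h d x <= eta x^2 + h^2 d^2 / eta], and [h >= m] on the [x^2] term. *)
have young : 0 <= eta * (2 * h * d * x + L ^+ 2 / eta * d ^+ 2 + eta * x ^+ 2).
  have := sqr_ge0 (h * d + eta * x); rewrite -hk in h2L; nra.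
have hx : m * x ^+ 2 <= h * x ^+ 2 by rewrite ler_wpM2r ?sqr_ge0.
move: young; rewrite pmulr_rge0 //; nra.
Qed.

Lemma diag_scaled_norm_le (m L : R) n (g e : 'cV[R]_n) :
  0 < m -> diag_scaled m L g e -> dot g g <= L ^+ 2 * dot e e.
Proof.
move=> m_gt0 g_e; rewrite /dot !mulr_sumr; apply: ler_sum => i _.
have [h /andP[mh hL] ->] := g_e i.
rewrite -!expr2 exprMn ler_wpM2r ?sqr_ge0 // ler_sqr ?nnegrE; lra.
Qed.

Lemma mul_lt1_of_lt_div1 (a d : R) : 0 < a -> a < 1 / d -> a * d < 1.
Proof.
move=> a_gt0 a_lt; have [d_le0|d_gt0] := lerP d 0.
  have : 1 / d <= 0 by rewrite div1r invr_le0.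
  lra.
by rewrite -ltr_pdivlMr // mulrC.
Qed.

Lemma le_contraction_of_gap (S S0 Q c K : R) : 0 < c -> 0 < K ->
  S <= K * Q -> S + c * Q <= S0 -> S <= 1 / (1 + c / K) * S0.
Proof.
move=> c_gt0 K_gt0 S_le gap.
have cK_gt0 : 0 < c / K by rewrite divr_gt0.
have : c / K * S <= c / K * (K * Q) by rewrite ler_wpM2l // ltW.
rewrite mulrA divfK ?gt_eqF // div1r ler_pdivlMl ?ltr_pwDl //; lra.
Qed.

Section OneStep.
Variables (n e : nat) (A : 'M[R]_(e, n)) (B : 'M[R]_n) (m L al be eta rB rA : R).
Hypotheses (Bsym : B^T = B) (Bpsd : forall v, 0 <= dot v (B *m v)).
Hypotheses (m_gt0 : 0 < m) (eta_gt0 : 0 < eta) (al_gt0 : 0 < al) (be_gt0 : 0 < be).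
Hypothesis B_rayleigh : forall u, dot u (B *m u) <= rB * dot u u.
Hypothesis AtA_rayleigh : forall u, dot (A *m u) (A *m u) <= rA * dot u u.

Definition lyapunov (x : 'cV[R]_n) (mu : 'cV[R]_e) : R :=
  dot x (x - al *: (B *m x)) + al / be * dot mu mu.

(* The FlexPD-F updates in deviation form: x, g, mu stand for x - xs, gradF f x - gradF f xs
   and lambda - lams. *)
Definition primal_step (x g : 'cV[R]_n) (mu : 'cV[R]_e) : 'cV[R]_n :=
  x - al *: (B *m x) - al *: g - al *: (A^T *m mu).

Definition dual_step (mu : 'cV[R]_e) (p : 'cV[R]_n) : 'cV[R]_e := mu + be *: (A *m p).

Lemma primal_step_multiplier x g mu p : p = primal_step x g mu ->
  al *: (A^T *m mu) = (x - p) - al *: (B *m x) - al *: g.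
Proof. by move=> ->; apply/matrixP => i j; rewrite /primal_step !mxE; ring. Qed.

Lemma lyapunov_gap x g mu p : p = primal_step x g mu -> diag_scaled m L g x ->
  lyapunov p (dual_step mu p) + (1 - al * (L ^+ 2 / eta + rB)) * dot (x - p) (x - p)
    + al * (2 * m - eta - be * rA) * dot p p <= lyapunov x mu.
Proof.
move=> pE g_x; set d := x - p.
have young : (2 * m - eta) * dot p p - L ^+ 2 / eta * dot d d <= 2 * dot g p.
  exact: diag_scaled_young.
have xE : x = p + d by rewrite /d addrC subrK.
have AmuE : al *: (A^T *m mu) = d - al *: (B *m x) - al *: g.
  exact: primal_step_multiplier.
clearbody d; rewrite /lyapunov /dual_step.
set P := dot p p; set D := dot d d; set pBp := dot p (B *m p); set q := dot d (B *m p).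
set dBd := dot d (B *m d); set dp := dot d p; set gp := dot g p.
set mAp := dot mu (A *m p); set ApAp := dot (A *m p) (A *m p); set mm := dot mu mu.
have UpE : dot p (p - al *: (B *m p)) = P - al * pBp by rewrite dotBr dotZr.
have UxE : dot x (x - al *: (B *m x)) = P + 2 * dp + D - al * (pBp + 2 * q + dBd).
  rewrite xE dotBr !dotDl !dotDr !dotZr mulmxDr !dotDr (dotC p d).
  rewrite -(dot_mulmx_sym p d Bsym) (dotC (B *m p) d) -/P -/D -/pBp -/q -/dBd -/dp; ring.
have mu'E : dot (mu + be *: (A *m p)) (mu + be *: (A *m p))
    = mm + 2 * be * mAp + be ^+ 2 * ApAp.
  rewrite dotDl !dotDr !dotZl !dotZr (dotC (A *m p) mu) -/mm -/mAp -/ApAp; ring.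
have mApE : al * mAp = dp - al * (pBp + q) - al * gp.
  rewrite /mAp dot_mulmx -dotZl AmuE !dotBl !dotZl xE mulmxDr dotDl.
  rewrite (dotC (B *m p)) (dot_mulmx_sym d p Bsym) -/pBp -/q -/gp -/dp; ring.
have scaleE : al / be * (mm + 2 * be * mAp + be ^+ 2 * ApAp)
    = al / be * mm + 2 * (al * mAp) + al * be * ApAp.
  by field; rewrite gt_eqF.
have pBp_ge0 : 0 <= al * pBp by apply: mulr_ge0; [exact: ltW | exact: Bpsd].
have young' : al * ((2 * m - eta) * P - L ^+ 2 / eta * D) <= al * (2 * gp).
  by apply: ler_wpM2l; [exact: ltW | exact: young].
have dBd_le : al * dBd <= al * (rB * D).
  by apply: ler_wpM2l; [exact: ltW | exact: B_rayleigh].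
have ApAp_le : al * be * ApAp <= al * be * (rA * P).
  by apply: ler_wpM2l; [rewrite mulr_ge0 ?ltW | exact: AtA_rayleigh].
(* lyapunov x mu - lyapunov p (dual_step mu p) = D - al dBd + 2 al (pBp + gp) - al be ApAp. *)
rewrite UpE UxE mu'E scaleE mApE; lra.
Qed.

Lemma dual_step_trmx_bound : exists2 C, 0 < C & forall x g mu p,
  p = primal_step x g mu -> diag_scaled m L g x ->
  al ^+ 2 * dot (A^T *m dual_step mu p) (A^T *m dual_step mu p)
    <= C * (dot p p + dot (x - p) (x - p)).
Proof.
have [KB KB_gt0 hKB] := mulmx_norm_bounded B.
have [KA KA_gt0 hKA] := mulmx_norm_bounded (A^T *m A).
set c := al ^+ 2 * (KB + L ^+ 2); set c' := (al * be) ^+ 2 * KA.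
have c_ge0 : 0 <= c by rewrite mulr_ge0 ?sqr_ge0 // addr_ge0 ?sqr_ge0 ?ltW.
have c'_ge0 : 0 <= c' by rewrite mulr_ge0 ?sqr_ge0 ?ltW.
exists (4 + 8 * c + 4 * c') => [|x g mu p pE g_x]; first lra.
set d := x - p; set P := dot p p; set D := dot d d.
have xE : x = p + d by rewrite /d addrC subrK.
have wE : al *: (A^T *m dual_step mu p)
    = d + (- al) *: (B *m x) + (- al) *: g + (al * be) *: ((A^T *m A) *m p).
  rewrite /dual_step mulmxDr scalerDr (primal_step_multiplier pE) -/d -scalemxAr mulmxA scalerA.
  by rewrite !scaleNr.
have sum_le :=
  dot_add4_le d ((- al) *: (B *m x)) ((- al) *: g) ((al * be) *: ((A^T *m A) *m p)).
rewrite -wE !dotZl !dotZr !mulrA -!expr2 sqrrN -/D in sum_le.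
have Bxg_le : al ^+ 2 * dot (B *m x) (B *m x) + al ^+ 2 * dot g g <= c * dot x x.
  rewrite /c -mulrDr -mulrA ler_wpM2l ?sqr_ge0 // mulrDl lerD //.
  exact: diag_scaled_norm_le g_x.
have x_le : c * dot x x <= c * (2 * (P + D)) by rewrite ler_wpM2l // xE dot_add2_le.
have AtAp_le : (al * be) ^+ 2 * dot (A^T *m A *m p) (A^T *m A *m p) <= c' * P.
  by rewrite /c' -mulrA ler_wpM2l ?sqr_ge0.
have P_ge0 : 0 <= P := dot_ge0 p.
have c'D_ge0 : 0 <= c' * D by rewrite mulr_ge0 ?dot_ge0.
lra.
Qed.

Lemma lyapunov_step_le_sqr : exists2 K, 0 < K & forall x g z p,
  p = primal_step x g (A *m z) -> diag_scaled m L g x ->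
  lyapunov p (dual_step (A *m z) p) <= K * (dot p p + dot (x - p) (x - p)).
Proof.
have [Kc Kc_gt0 hKc] := range_norm_le_trmx A.
have [C C_gt0 hC] := dual_step_trmx_bound.
have albe_gt0 : 0 < al * be by rewrite mulr_gt0.
set K := Kc * C / (al * be).
have K_ge0 : 0 <= K by rewrite /K divr_ge0 ?mulr_ge0 ?ltW.
exists (1 + K) => [|x g z p pE g_x]; first lra.
set mu' := dual_step (A *m z) p; set X := dot (A^T *m mu') (A^T *m mu').
have mu'E : mu' = A *m (z + be *: p) by rewrite /mu' /dual_step mulmxDr scalemxAr.
have Up_le : dot p (p - al *: (B *m p)) <= dot p p.
  by rewrite dotBr dotZr gerBl; apply: mulr_ge0; [exact: ltW | exact: Bpsd].
have mu'_le : al / be * dot mu' mu' <= K * (dot p p + dot (x - p) (x - p)).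
  have := hKc (z + be *: p); rewrite -mu'E -/X => mu'_X.
  have := hC x g (A *m z) p pE g_x; rewrite -/mu' -/X => X_le.
  have -> : K * (dot p p + dot (x - p) (x - p))
      = Kc / (al * be) * (C * (dot p p + dot (x - p) (x - p))) by rewrite /K; ring.
  apply: le_trans (_ : Kc / (al * be) * (al ^+ 2 * X) <= _); last first.
    by rewrite ler_wpM2l // divr_ge0 ?ltW.
  have -> : Kc / (al * be) * (al ^+ 2 * X) = al / be * (Kc * X).
    by field; rewrite !gt_eqF.
  by rewrite ler_wpM2l // divr_ge0 ?ltW.
have := dot_ge0 (x - p); rewrite /lyapunov -/mu'; lra.
Qed.

Lemma lyapunov_contraction : al * (L ^+ 2 / eta + rB) < 1 -> be * rA < 2 * m - eta ->
  exists2 dl, 0 < dl & forall x g z p,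
    p = primal_step x g (A *m z) -> diag_scaled m L g x ->
    lyapunov p (dual_step (A *m z) p) <= 1 / (1 + dl) * lyapunov x (A *m z).
Proof.
move=> al_small be_small.
set c1 := 1 - al * (L ^+ 2 / eta + rB); set c3 := al * (2 * m - eta - be * rA).
have c_gt0 : 0 < Num.min c1 c3 by rewrite lt_min subr_gt0 al_small mulr_gt0 // subr_gt0.
have [K K_gt0 hK] := lyapunov_step_le_sqr.
exists (Num.min c1 c3 / K) => [|x g z p pE g_x]; first by rewrite divr_gt0.
apply: le_contraction_of_gap c_gt0 K_gt0 (hK _ _ _ _ pE g_x) _.
have c_le1 : Num.min c1 c3 * dot (x - p) (x - p) <= c1 * dot (x - p) (x - p).
  by rewrite ler_wpM2r ?dot_ge0 // ge_min lexx.
have c_le3 : Num.min c1 c3 * dot p p <= c3 * dot p p.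
  by rewrite ler_wpM2r ?dot_ge0 // ge_min lexx orbT.
have := lyapunov_gap pE g_x; rewrite -/c1 -/c3; lra.
Qed.

End OneStep.

Lemma lyapunovE n e (B : 'M[R]_n) (al be : R) x (mu : 'cV[R]_e) :
  sqnormS (1%:M - al *: B) x + al / be * sqnorm mu = lyapunov B al be x mu.
Proof. by rewrite sqnormSE sqnormE mulmxBl mul1mx -scalemxAl. Qed.

Lemma flexpdF_multiplier_range n e (A : 'M[R]_(e, n)) B f al be T x0 k :
  exists z, (flexpdF A B f al be T x0 k).2 = A *m z.
Proof.
elim: k => [|k [z zE]]; first by exists 0; rewrite mulmx0.
by eexists; rewrite /= zE scalemxAr -mulmxDr.
Qed.

Lemma inner_step_sub_saddle n e (A : 'M[R]_(e, n)) B f al lam xs lams y :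
  B *m xs = 0 -> gradF f xs = - (A^T *m lams) ->
  inner_step A B f al lam y - xs
    = primal_step A B al (y - xs) (gradF f y - gradF f xs) (lam - lams).
Proof.
move=> Bxs grad_xs; rewrite /inner_step /primal_step mulmxBl mul1mx -scalemxAl.
by rewrite grad_xs !mulmxBr Bxs; apply/matrixP => i j; rewrite !mxE; ring.
Qed.

Lemma dual_step_sub_saddle n e (A : 'M[R]_(e, n)) be lam lams x xs :
  A *m xs = 0 -> lam + be *: (A *m x) - lams = dual_step A be (lam - lams) (x - xs).
Proof. by move=> Axs; rewrite /dual_step mulmxBr Axs subr0 addrAC. Qed.

Lemma inner_iter_last n e (A : 'M[R]_(e, n)) B f al T x lam : (0 < T)%N ->
  inner_iter A B f al T x lam = inner_step A B f al lam (inner_iter A B f al T.-1 x lam).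
Proof. by case: T. Qed.

End FlexPDConvergence.

Theorem theorem3p6 (R : realType) (n eps : nat) (ends : 'I_eps -> 'I_n * 'I_n)
  (B : 'M[R]_n) (f : 'I_n -> R -> R) (m L : R)
  (xs : 'cV[R]_n) (lams : 'cV[R]_eps)
  (alpha beta eta1 rhoB rhoAA : R) (T : nat) (x0 : 'cV[R]_n) :
  (0 < n)%N ->
  simple_graph ends -> graph_connected ends ->
  B^T = B -> psd B ->
  (forall v : 'cV[R]_n, B *m v = 0 <-> incidence R ends *m v = 0) ->
  (forall i j : 'I_n, i != j -> B i j != 0 -> edge_adj ends i j) ->
  0 < m -> m <= L ->
  (forall i x, derivable (f i) x 1 /\ derivable (derive1 (f i)) x 1) ->
  (forall i x, m <= derive1 (derive1 (f i)) x <= L) ->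
  (* x* minimizes f subject to A x = 0 *)
  incidence R ends *m xs = 0 ->
  (forall y : 'cV[R]_n, incidence R ends *m y = 0 -> Fsum f xs <= Fsum f y) ->
  (* lambda* : KKT multiplier in the column space of A *)
  gradF f xs + (incidence R ends)^T *m lams = 0 ->
  (exists z : 'cV[R]_n, lams = incidence R ends *m z) ->
  is_largest_eigenvalue B rhoB ->
  is_largest_eigenvalue ((incidence R ends)^T *m incidence R ends) rhoAA ->
  (1 <= T)%N ->
  0 < eta1 -> eta1 < 2 * m ->
  0 < alpha -> alpha < 1 / (L ^+ 2 / eta1 + rhoB) ->
  0 < beta -> beta * rhoAA < 2 * m - eta1 ->
  exists deltaF : R, 0 < deltaF /\
    forall k : nat,
      let U := 1%:M - alpha *: B in
      let p := flexpdF (incidence R ends) B f alpha beta T x0 k in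
      let q := flexpdF (incidence R ends) B f alpha beta T x0 k.+1 in
      sqnormS U (inner_iter (incidence R ends) B f alpha T p.1 p.2 - xs)
        + alpha / beta * sqnorm (q.2 - lams)
      <= 1 / (1 + deltaF) *
         (sqnormS U (inner_iter (incidence R ends) B f alpha T.-1 p.1 p.2 - xs)
          + alpha / beta * sqnorm (p.2 - lams)).
Proof.
move=> n_gt0 _ _ Bsym Bpsd B_A_ker _ m_gt0 _ f_der f''_mL Axs _ kkt [zs lamsE]
  [_ rhoB_max] [_ rhoAA_max] T_gt0 eta_gt0 _ al_gt0 al_lt be_gt0 be_lt.
set A := incidence R ends; rewrite -/A in B_A_ker Axs kkt lamsE rhoAA_max *.
have Bxs : B *m xs = 0 by apply/B_A_ker.
have grad_xs : gradF f xs = - (A^T *m lams) by apply/eqP; rewrite -addr_eq0 kkt.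
have B_psd v : 0 <= dot v (B *m v) by rewrite -sqnormSE.
have B_rayleigh := rayleigh_le_max_eigenvalue n_gt0 Bsym rhoB_max.
have AtA_rayleigh := mulmx_norm_le_max_eigenvalue n_gt0 rhoAA_max.
have al_small := mul_lt1_of_lt_div1 al_gt0 al_lt.
have [dl dl_gt0 contraction] := lyapunov_contraction Bsym B_psd m_gt0 eta_gt0 al_gt0
  be_gt0 B_rayleigh AtA_rayleigh al_small be_lt.
exists dl; split => // k; cbv zeta.
set p := flexpdF A B f alpha beta T x0 k.
have [zk lamE] := flexpdF_multiplier_range A B f alpha beta T x0 k.
have muE : p.2 - lams = A *m (zk - zs) by rewrite mulmxBr -lamE -lamsE.
rewrite /= -/p inner_iter_last // (dual_step_sub_saddle _ _ _ _ Axs).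
rewrite (inner_step_sub_saddle _ _ _ Bxs grad_xs) !lyapunovE muE.
by apply: contraction => //; exact: gradF_diag_scaled.
Qed.
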